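(* Let $k$ be a field, $n\ge5$ an integer, $q\in k$ a primitive $n$-th root of unity, and $\mathcal{C}=(a_{ij})_{t\times t}$ the Cartan matrix of a finite-dimensional semisimple simply laced Lie algebra. In the Hopf algebra $\Pi^{\mathcal{C}}$ described in the context, for all $x\in\mathbb{Z}_n^t$ and $i,j\in\{1,\dots,t\}$ with $i\ne j$, setting $\kappa=1-a_{ij}$, $$\Delta(\omega_{ij}(x))=\sum_{u+v=x}q^{\kappa u_i+u_j}e_u\otimes\omega_{ij}(v)+\sum_{u+v=x}\omega_{ij}(u)\otimes e_v,$$ $$\Delta(\omega_{ij}(x)^* )=\sum_{u+v=x}e_u\otimes\omega_{ij}(v)^*+\sum_{u+v=x}q^{-\kappa v_i-v_j}\omega_{ij}(u)^*\otimes e_v.$$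
   Context: Notation: $\mathbb{Z}_n=\mathbb{Z}/n\mathbb{Z}$; $c^i\in\mathbb{Z}_n^t$ is the $i$-th column of $\mathcal{C}$ reduced mod $n$; $x_i$ is the $i$-th coordinate of $x\in\mathbb{Z}_n^t$; $q^m$ for $m\in\mathbb{Z}_n$ is well defined. $[m]_y=\frac{y^m-y^{-m}}{y-y^{-1}}$, $[m]!_y=[m]_y\cdots[1]_y$, $[0]!_y=1$, $\begin{bmatrix} m\\ s\end{bmatrix}_y=\frac{[m]!_y}{[s]!_y[m-s]!_y}$. Quiver: $\overline{\mathcal{Q}}$ has vertex set $\mathbb{Z}_n^t$ and arrows $a(x,i):x-c^i\to x$, $a(x,i)^*:x\to x-c^i$. In $k\overline{\mathcal{Q}}$ paths compose right to left (product of paths $p,p'$ is $pp'$ if source of $p$ = target of $p'$, else 0); $e_x$ is the trivial path at $x$. $a(x,i_1\cdots i_s)=a(x,i_1)a(x-c^{i_1},i_2)\cdots a(x-c^{i_1}-\cdots-c^{i_{s-1}},i_s)$ and $a(x,i_1\cdots i_s)^*=a(x-c^{i_1}-\cdots-c^{i_{s-1}},i_s)^*\cdots a(x-c^{i_1},i_2)^*a(x,i_1)^*$; $i^s$ denotes $s$ consecutive letters $i$. Define $\omega_{ij}(x)=\sum_{t=0}^{\kappa}(-1)^t\begin{bmatrix}\kappa\\ t\end{bmatrix}_q a(x,i^{\kappa-t}\,j\,i^t)$ and $\omega_{ij}(x)^*=\sum_{t=0}^{\kappa}(-1)^t\begin{bmatrix}\kappa\\ t\end{bmatrix}_q a(x,i^{\kappa-t}\,j\,i^t)^*$.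 $\Pi^{\mathcal{C}}=k\overline{\mathcal{Q}}/I$, $I$ generated by $a(x,i)a(x,i)^*-a(x+c^i,i)^*a(x+c^i,i)-\frac{q^{x_i}-q^{-x_i}}{q-q^{-1}}e_x$ (all $x,i$) and $a(x,j)^*a(x,i)-a(x-c^j,i)a(x-c^i,j)^*$ (all $x$, $i\ne j$). It is a Hopf algebra with $\Delta(e_x)=\sum_{u+v=x}e_u\otimes e_v$, $\Delta(a(x,i))=\sum_{u+v=x}q^{u_i}e_u\otimes a(v,i)+\sum_{u+v=x}a(u,i)\otimes e_v$, $\Delta(a(x,i)^* )=\sum_{u+v=x}e_u\otimes a(v,i)^*+\sum_{u+v=x}q^{-v_i}a(u,i)^*\otimes e_v$. *)

From HB Require Import structures.
From mathcomp Require Import all_boot all_order all_algebra.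
Set Implicit Arguments. Unset Strict Implicit. Unset Printing Implicit Defensive.
Import Order.TTheory GRing.Theory Num.Theory.
Local Open Scope ring_scope.

Definition simply_laced_cartan (t : nat) (C : 'M[int]_t) : Prop :=
  [/\ (forall i, C i i = 2),
      (forall i j, i != j -> C i j = 0 \/ C i j = -1),
      (forall i j, C i j = C j i)
    & (forall v : 'rV[rat]_t, v != 0 -> 0 < (v *m map_mx intr C *m v^T) 0 0)].

(* Vertices: Z_n^t (n >= 2 assumed where used, so 'Z_n = Z/nZ). *)
Notation vtx n t := 'rV['Z_n]_t.

Section PathAlg.
Variables (k : fieldType) (n t : nat) (C : 'M[int]_t) (q : k).

Definition colv (i : 'I_t) : vtx n t := \row_l ((C l i)%:~R : 'Z_n).

(* arrows: (x,i,false) = a(x,i) : x - c^i -> x ;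
           (x,i,true)  = a(x,i)^* : x -> x - c^i *)
Definition arrow := (vtx n t * 'I_t * bool)%type.
Definition asrc (a : arrow) : vtx n t :=
  let: (x, i, b) := a in if b then x else x - colv i.
Definition atgt (a : arrow) : vtx n t :=
  let: (x, i, b) := a in if b then x - colv i else x.

(* a path (x, [:: a1; ...; am]) is the product a1 a2 ... am (composition right
   to left) with target x; (x, [::]) is the trivial path e_x. *)
Definition path := (vtx n t * seq arrow)%type.
Definition psrc (p : path) : vtx n t :=
  if p.2 is a :: s then asrc (last a s) else p.1.
Definition pmul (p p' : path) : option path :=
  if psrc p == p'.1 then Some (p.1, p.2 ++ p'.2) else None.

(* elements of kQ as formal linear combinations of paths *)
Definition elt := seq (k * path).
Definition coef (e : elt) (p : path) : k := \sum_(z <- e | z.2 == p) z.1.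
Definition escale (c : k) (e : elt) : elt := [seq (c * z.1, z.2) | z <- e].
Definition eopp (e : elt) : elt := escale (-1) e.
Definition emul (e1 e2 : elt) : elt :=
  flatten [seq flatten [seq (if pmul z1.2 z2.2 is Some p
                             then [:: (z1.1 * z2.1, p)] else [::]) | z2 <- e2]
          | z1 <- e1].
Definition ebasis (x : vtx n t) : elt := [:: (1, (x, [::]))].
Definition earr (a : arrow) : elt := [:: (1, (atgt a, [:: a]))].

(* elements of kQ (x) kQ as formal combinations of pairs of paths *)
Definition tens := seq (k * path * path).
Definition tcoef (T : tens) (p p' : path) : k :=
  \sum_(z <- T | (z.1.2 == p) && (z.2 == p')) z.1.1.
Definition tscale (c : k) (T : tens) : tens := [seq (c * z.1.1, z.1.2, z.2) | z <- T].
Definition topp (T : tens) : tens := tscale (-1) T.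
Definition tmul (T1 T2 : tens) : tens :=
  flatten [seq flatten [seq
     (match pmul z1.1.2 z2.1.2, pmul z1.2 z2.2 with
      | Some p, Some p' => [:: (z1.1.1 * z2.1.1, p, p')]
      | _, _ => [::] end) | z2 <- T2] | z1 <- T1].
Definition etens (e1 e2 : elt) : tens :=
  [seq (z1.1 * z2.1, z1.2, z2.2) | z1 <- e1, z2 <- e2].

Definition allv : seq (vtx n t) := enum {: vtx n t}.

Definition qp (m : 'Z_n) : k := q ^+ (val m).
Definition qm (m : 'Z_n) : k := q ^- (val m).

Definition DeltaE (x : vtx n t) : tens :=
  flatten [seq etens (ebasis u) (ebasis (x - u)) | u : vtx n t <- allv].
Definition DeltaA (a : arrow) : tens :=
  let: (x, i, b) := a in
  if b then
    flatten [seq etens (ebasis u) (earr (x - u, i, true)) | u : vtx n t <- allv] ++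
    flatten [seq tscale (qm ((x - u) 0 i)) (etens (earr (u, i, true)) (ebasis (x - u)))
            | u : vtx n t <- allv]
  else
    flatten [seq tscale (qp (u 0 i)) (etens (ebasis u) (earr (x - u, i, false)))
            | u : vtx n t <- allv] ++
    flatten [seq etens (earr (u, i, false)) (ebasis (x - u)) | u : vtx n t <- allv].
Definition DeltaP (p : path) : tens :=
  foldr (fun a T => tmul (DeltaA a) T) (DeltaE (psrc p)) p.2.
Definition Delta (e : elt) : tens :=
  flatten [seq tscale z.1 (DeltaP z.2) | z <- e].

Definition qint (m : nat) : k := (q ^+ m - q ^- m) / (q - q^-1).
Definition qfact (m : nat) : k := \prod_(1 <= l < m.+1) qint l.
Definition qbinom (m s : nat) : k := qfact m / (qfact s * qfact (m - s)).
Definition qintZ (m : 'Z_n) : k := (qp m - qm m) / (q - q^-1).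

Fixpoint aw (x : vtx n t) (w : seq 'I_t) : elt :=
  if w is i :: w' then emul (earr (x, i, false)) (aw (x - colv i) w') else ebasis x.
Fixpoint aws (x : vtx n t) (w : seq 'I_t) : elt :=
  if w is i :: w' then emul (aws (x - colv i) w') (earr (x, i, true)) else ebasis x.

Definition kappa (i j : 'I_t) : nat := `|1 - C i j|%N.
Definition omega (x : vtx n t) (i j : 'I_t) : elt :=
  let K := kappa i j in
  flatten [seq escale ((-1) ^+ s * qbinom K s) (aw x (nseq (K - s) i ++ j :: nseq s i))
          | s <- iota 0 K.+1].
Definition omegas (x : vtx n t) (i j : 'I_t) : elt :=
  let K := kappa i j in
  flatten [seq escale ((-1) ^+ s * qbinom K s) (aws x (nseq (K - s) i ++ j :: nseq s i))
          | s <- iota 0 K.+1].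

(* generators of the ideal I: gen (x,i,i) is the first relation at (x,i),
   gen (x,i,j) with i != j is the second relation at (x,i,j) *)
Definition relg (g : vtx n t * 'I_t * 'I_t) : elt :=
  let: (x, i, j) := g in
  if i == j then
    emul (earr (x, i, false)) (earr (x, i, true)) ++
    eopp (emul (earr (x + colv i, i, true)) (earr (x + colv i, i, false))) ++
    eopp (escale (qintZ (x 0 i)) (ebasis x))
  else
    emul (earr (x, j, true)) (earr (x, i, false)) ++
    eopp (emul (earr (x - colv j, i, false)) (earr (x - colv i, j, true))).

(* a spanning element of I (x) kQ + kQ (x) I:  c (p g p') (x) P  or  P (x) c (p g p') *)
Definition iterm (z : k * path * (vtx n t * 'I_t * 'I_t) * path * path * bool) : tens :=
  let: (c, p, g, p', P, side) := z in
  let m := emul (emul [:: (c, p)] (relg g)) [:: (1, p')] in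
  if side then etens m [:: (1, P)] else etens [:: (1, P)] m.

(* T lies in the kernel of kQ (x) kQ -> Pi (x) Pi *)
Definition in_ker (T : tens) : Prop :=
  exists L : seq (k * path * (vtx n t * 'I_t * 'I_t) * path * path * bool),
    forall P P', tcoef T P P' = tcoef (flatten [seq iterm z | z <- L]) P P'.

(* equality in Pi^C (x) Pi^C *)
Definition teqPi (T1 T2 : tens) : Prop := in_ker (T1 ++ topp T2).

End PathAlg.

(* Proof idea: the identities hold already in the path algebra, coefficient by
   coefficient, so no relation of the ideal I is used.  As Delta is multiplicative
   on paths, Delta (a(x, w)) is the sum over u and over the splittings of the word w
   into the letters going to the left and to the right factor of
   c * a(u, L) (x) a(x - u, R), where c multiplies one q^(u'_l) for every letter l
   sent to the right, u' being the current left vertex.  In omega_ij the terms with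
   L and R both nonempty cancel: for a_ij in {0, -1}, i.e. kappa <= 2, this is the
   q-Serre identity between the coefficients (-1)^s [kappa; s]_q, and the two
   remaining extreme terms are the right-hand side.  The starred case is the mirror
   image, the q-powers being read off the right vertex. *)

From Pilot Require Import Defs.
From HB Require Import structures.
From mathcomp Require Import all_boot all_order all_algebra.
From mathcomp Require Import ring.
Import Order.TTheory GRing.Theory Num.Theory.
Local Open Scope ring_scope.
Set Implicit Arguments. Unset Strict Implicit. Unset Printing Implicit Defensive.

Lemma perm_flatten_exchange (A B : Type) (X : eqType) (h : A -> B -> seq X) s1 s2 :
  perm_eq (flatten [seq flatten [seq h a b | b <- s2] | a <- s1])
          (flatten [seq flatten [seq h a b | a <- s1] | b <- s2]).
Proof.
apply/permP => p; rewrite !count_flatten !sumnE !big_map.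
under eq_bigr do rewrite count_flatten sumnE !big_map.
rewrite exchange_big.
by under [RHS]eq_bigr do rewrite count_flatten sumnE !big_map.
Qed.

Lemma perm_flatten_map_cat (A : Type) (X : eqType) (f g : A -> seq X) s :
  perm_eq (flatten (map f s) ++ flatten (map g s)) (flatten [seq f a ++ g a | a <- s]).
Proof.
elim: s => //= a s IH; rewrite -!catA perm_cat2l perm_catCA perm_cat2l.
exact: IH.
Qed.

Lemma perm_flatten_map (A : Type) (X : eqType) (f g : A -> seq X) s :
  (forall a, perm_eq (f a) (g a)) -> perm_eq (flatten (map f s)) (flatten (map g s)).
Proof. by move=> eq_fg; elim: s => //= a s IH; apply: perm_cat. Qed.

Lemma flatten_map_flatten (A B X : Type) (h : B -> seq X) (G : A -> seq B) s :
  flatten (map h (flatten (map G s))) = flatten [seq flatten (map h (G a)) | a <- s].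
Proof. by elim: s => //= a s IH; rewrite map_cat flatten_cat IH. Qed.

Lemma perm_flatten_enum_addr (V : finZmodType) (X : eqType) (F : V -> seq X) (d : V) :
  perm_eq (flatten [seq F (u + d) | u <- enum V]) (flatten [seq F u | u <- enum V]).
Proof.
rewrite (map_comp F (+%R^~ d)); apply/perm_flatten/perm_map.
apply: uniq_perm; rewrite ?map_inj_uniq -?enumT ?enum_uniq //; first exact: addIr.
by move=> u; rewrite mem_enum; apply/mapP; exists (u - d); rewrite ?mem_enum ?subrK.
Qed.

Lemma flatten_map_single (A : eqType) (X : Type) (F : A -> seq X) s a0 :
  uniq s -> a0 \in s -> (forall a, a != a0 -> F a = [::]) -> flatten (map F s) = F a0.
Proof.
move=> + + F0; elim: s => //= a s IH /andP[a_s s_uniq].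
rewrite inE => /predU1P[a0_a | s_a0]; last first.
  by rewrite F0 ?IH //; apply: contraNneq a_s => ->.
rewrite {IH}a0_a in F0 *; rewrite -[RHS]cats0; congr (_ ++ _).
elim: s a_s {s_uniq} => //= b s IH; rewrite inE negb_or => /andP[a_b /IH ->].
by rewrite F0 // eq_sym.
Qed.

Section TensorAlgebra.
Variables (k : fieldType) (n t : nat) (C : 'M[int]_t).
Local Notation V := (vtx n t).
Local Notation P := (Defs.path n t).
Local Notation T := (tens k n t).

Definition tdelta (p p' P1 P2 : P) : k := ((p == P1) && (p' == P2))%:R.

Lemma tcoefE (T1 : T) P1 P2 : tcoef T1 P1 P2 = \sum_(z <- T1) z.1.1 * tdelta z.1.2 z.2 P1 P2.
Proof.
rewrite /tcoef big_mkcond; apply: eq_bigr => z _ /=; rewrite /tdelta.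
by case: ifP => _; rewrite ?mulr1 ?mulr0.
Qed.

Lemma tcoef_cat (T1 T2 : T) P1 P2 : tcoef (T1 ++ T2) P1 P2 = tcoef T1 P1 P2 + tcoef T2 P1 P2.
Proof. exact: big_cat. Qed.

Lemma tcoef_perm (T1 T2 : T) P1 P2 : perm_eq T1 T2 -> tcoef T1 P1 P2 = tcoef T2 P1 P2.
Proof. exact: perm_big. Qed.

Lemma tcoef_flatten (L : seq T) P1 P2 : tcoef (flatten L) P1 P2 = \sum_(l <- L) tcoef l P1 P2.
Proof. exact: big_flatten. Qed.

Lemma tcoef_tscale a (T1 : T) P1 P2 : tcoef (tscale a T1) P1 P2 = a * tcoef T1 P1 P2.
Proof. by rewrite /tcoef big_map big_distrr. Qed.

Lemma tcoef_etens1l (p : P) (e : elt k n t) P1 P2 :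
  tcoef (etens [:: (1, p)] e) P1 P2 = \sum_(z <- e) z.1 * tdelta p z.2 P1 P2.
Proof. by rewrite tcoefE /etens /= cats0 big_map; under eq_bigr do rewrite mul1r. Qed.

Lemma tcoef_etens1r (p : P) (e : elt k n t) P1 P2 :
  tcoef (etens e [:: (1, p)]) P1 P2 = \sum_(z <- e) z.1 * tdelta z.2 p P1 P2.
Proof. by rewrite tcoefE /etens flatten_map1 big_map; under eq_bigr do rewrite mulr1. Qed.

Lemma teqPi_tcoef (q : k) (T1 T2 : T) :
  (forall P1 P2, tcoef T1 P1 P2 = tcoef T2 P1 P2) -> teqPi C q T1 T2.
Proof.
move=> eqT; exists [::] => P1 P2.
by rewrite tcoef_cat /topp tcoef_tscale eqT mulN1r subrr [RHS]big_nil.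
Qed.

Definition tmul_term (z1 z2 : k * P * P) : T :=
  match pmul C z1.1.2 z2.1.2, pmul C z1.2 z2.2 with
  | Some p, Some p' => [:: (z1.1.1 * z2.1.1, p, p')]
  | _, _ => [::] end.

Lemma tmulE (T1 T2 : T) :
  tmul C T1 T2 = flatten [seq flatten [seq tmul_term z1 z2 | z2 <- T2] | z1 <- T1].
Proof. by []. Qed.

Lemma tmul_catl (T1 T1' T2 : T) : tmul C (T1 ++ T1') T2 = tmul C T1 T2 ++ tmul C T1' T2.
Proof. by rewrite !tmulE map_cat flatten_cat. Qed.

Lemma perm_tmulr (T1 T2 T2' : T) : perm_eq T2 T2' -> perm_eq (tmul C T1 T2) (tmul C T1 T2').
Proof.
by move=> eqT2; apply: perm_flatten_map => z1; apply/perm_flatten/perm_map.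
Qed.

Lemma perm_tmul_matched (f : V -> k * P * P) (g : k * P * P -> V) (T2 : T) :
    (forall z2 u, u != g z2 -> tmul_term (f u) z2 = [::]) ->
  perm_eq (tmul C (map f (allv n t)) T2) (flatten [seq tmul_term (f (g z2)) z2 | z2 <- T2]).
Proof.
move=> fg; rewrite tmulE -map_comp /comp.
apply: perm_trans (perm_flatten_exchange (fun u z2 => tmul_term (f u) z2) _ _) _.
apply: perm_flatten_map => z2.
rewrite (@flatten_map_single _ _ (fun u => tmul_term (f u) z2) _ (g z2)) //.
- exact: enum_uniq.
- by rewrite mem_enum.
- by move=> u /fg.
Qed.

Lemma perm_tmul_matched_flatten (Z : eqType) (f : V -> k * P * P) (g : k * P * P -> V)
    (S : V -> seq Z) (mk r : V -> Z -> k * P * P) :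
    (forall z2 u, u != g z2 -> tmul_term (f u) z2 = [::]) ->
    (forall u z, z \in S u -> tmul_term (f (g (mk u z))) (mk u z) = [:: r u z]) ->
  perm_eq (tmul C (map f (allv n t)) (flatten [seq map (mk u) (S u) | u : V <- allv n t]))
          (flatten [seq map (r u) (S u) | u : V <- allv n t]).
Proof.
move=> fg fr; apply: perm_trans (perm_tmul_matched _ fg) _.
rewrite flatten_map_flatten; apply: perm_flatten_map => u.
suff -> : [seq tmul_term (f (g z2)) z2 | z2 <- map (mk u) (S u)] = [seq [:: r u z] | z <- S u].
  by rewrite flatten_map1.
by rewrite -map_comp; apply/eq_in_map => z /fr.
Qed.

End TensorAlgebra.

Arguments tdelta {k n t}.

Section Paths.
Variables (k : fieldType) (n t : nat) (C : 'M[int]_t) (q : k).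
Local Notation V := (vtx n t).
Local Notation P := (Defs.path n t).
Local Notation c := (colv n C).

Fixpoint apath (x : V) (w : seq 'I_t) : P :=
  if w is i :: w' then (x, (x, i, false) :: (apath (x - c i) w').2) else (x, [::]).

(* [spath x rw] is the path of [a(x, rev rw)^*]: its first arrow is the last letter. *)
Fixpoint spath (x : V) (rw : seq 'I_t) : P :=
  if rw is i :: rw' then
    let p := spath x rw' in (p.1 - c i, (p.1, i, true) :: p.2)
  else (x, [::]).

Lemma apath_tgt x w : (apath x w).1 = x. Proof. by case: w. Qed.

Lemma apathE x w : (x, (apath x w).2) = apath x w. Proof. by case: w. Qed.

Lemma psrc_apath_cons x i w : psrc C (apath x (i :: w)) = psrc C (apath (x - c i) w).
Proof. by case: w. Qed.

Lemma psrc_spath x rw : psrc C (spath x rw) = x.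
Proof. by elim: rw => //= i [|j rw] IH. Qed.

Lemma spath_tgt x rw : (spath x rw).1 = x - \sum_(l <- rw) c l.
Proof.
elim: rw => /= [|i rw ->]; first by rewrite big_nil subr0.
by rewrite big_cons opprD addrA addrAC.
Qed.

Lemma spath_rcons x rw i :
  spath x (rcons rw i) = ((spath (x - c i) rw).1, (spath (x - c i) rw).2 ++ [:: (x, i, true)]).
Proof. by elim: rw => //= j rw ->. Qed.

Lemma aw_apath x w : aw k C x w = [:: (1, apath x w)].
Proof. by elim: w x => //= i w IH x; rewrite IH /emul /= /pmul /= apath_tgt eqxx /= mulr1. Qed.

Lemma aws_spath x w : aws k C x w = [:: (1, spath x (rev w))].
Proof.
elim: w x => //= i w IH x; rewrite IH /emul /= /pmul /= psrc_spath eqxx /= mulr1.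
by rewrite rev_cons spath_rcons.
Qed.

Lemma DeltaP_cons (v v' : V) (a : arrow n t) s : psrc C (v, a :: s) = psrc C (v', s) ->
  DeltaP C q (v, a :: s) = tmul C (DeltaA C q a) (DeltaP C q (v', s)).
Proof. by rewrite /DeltaP /= => ->. Qed.

Lemma DeltaA_arrow (x : V) i : DeltaA C q (x, i, false) =
  [seq (qp q (u 0 i), (u, [::]), (x - u, [:: (x - u, i, false)])) | u : V <- allv n t] ++
  [seq (1, (u, [:: (u, i, false)]), (x - u, [::])) | u : V <- allv n t].
Proof.
rewrite /DeltaA; congr (_ ++ _); rewrite -[RHS]flatten_map1; congr flatten;
  by apply: eq_map => u; rewrite /etens /= ?mulr1.
Qed.

Lemma DeltaA_star (y : V) i : DeltaA C q (y, i, true) =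
  [seq (1, (u, [::]), (y - u - c i, [:: (y - u, i, true)])) | u : V <- allv n t] ++
  [seq (qm q ((y - u) 0 i), (u - c i, [:: (u, i, true)]), (y - u, [::])) | u : V <- allv n t].
Proof.
rewrite /DeltaA; congr (_ ++ _); rewrite -[RHS]flatten_map1; congr flatten;
  by apply: eq_map => u; rewrite /etens /= ?mulr1.
Qed.

Lemma DeltaE_map (x : V) : DeltaE k x = [seq (1, (u, [::]), (x - u, [::])) | u : V <- allv n t].
Proof.
by rewrite /DeltaE -[RHS]flatten_map1; congr flatten; apply: eq_map => u; rewrite /etens /= mulr1.
Qed.

End Paths.

Section CoproductOfPaths.
Variables (k : fieldType) (n t : nat) (C : 'M[int]_t) (q : k).
Local Notation V := (vtx n t).
Local Notation P := (Defs.path n t).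
Local Notation c := (colv n C).
Local Notation apath := (apath C).
Local Notation spath := (spath C).

(* [asplit u w] lists the ways of sending each letter of [w] to the left or to
   the right factor of [Delta (a(x, w))], with the q-power picked up, when the
   left factor ends at [u]. *)
Fixpoint asplit (u : V) (w : seq 'I_t) : seq (k * seq 'I_t * seq 'I_t) :=
  if w is i :: w' then
    [seq (qp q (u 0 i) * z.1.1, z.1.2, i :: z.2) | z <- asplit u w'] ++
    [seq (z.1.1, i :: z.1.2, z.2) | z <- asplit (u - c i) w']
  else [:: (1, [::], [::])].

Definition aterm (x u : V) (z : k * seq 'I_t * seq 'I_t) : k * P * P :=
  (z.1.1, apath u z.1.2, apath (x - u) z.2).

Definition acoprod (x : V) (w : seq 'I_t) : tens k n t :=
  flatten [seq map (aterm x u) (asplit u w) | u : V <- allv n t].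

Lemma DeltaP_apath x w : perm_eq (DeltaP C q (apath x w)) (acoprod x w).
Proof.
elim: w x => [|i w IH] x; first by rewrite /DeltaP /= DeltaE_map /acoprod /= flatten_map1.
have -> : DeltaP C q (apath x (i :: w)) =
          tmul C (DeltaA C q (x, i, false)) (DeltaP C q (apath (x - c i) w)).
  by have := psrc_apath_cons C x i w; rewrite /= -[apath _ w]apathE; apply: DeltaP_cons.
apply: perm_trans (perm_tmulr C _ (IH (x - c i))) _.
rewrite DeltaA_arrow tmul_catl /acoprod /=.
under [X in perm_eq _ (flatten X)]eq_map => u do rewrite map_cat -!map_comp.
apply: perm_trans _ (perm_flatten_map_cat _ _ _).
apply: perm_cat.
- apply: (perm_tmul_matched_flatten (g := fun z => z.1.2.1)).
  + by move=> z2 u ne; rewrite /tmul_term /pmul /= (negbTE ne).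
  + move=> u z _; rewrite /tmul_term /pmul /psrc /= !apath_tgt eqxx addrAC eqxx.
    by rewrite /aterm /= apathE [x - c i - u]addrAC.
- (* Sending [i] to the left moves the left vertex from [u - c i] to [u]. *)
  apply: perm_trans _ (perm_flatten_enum_addr _ (c i)).
  under [X in perm_eq _ (flatten X)]eq_map => u do rewrite /= addrK.
  apply: (perm_tmul_matched_flatten (g := fun z => z.1.2.1 + c i)).
  + by move=> z2 u ne; rewrite /tmul_term /pmul /= subr_eq (negbTE ne).
  + move=> u z _; rewrite /tmul_term /pmul /psrc /= !apath_tgt addrK eqxx.
    rewrite opprD addrA addrAC eqxx mul1r /aterm /= addrK apathE.
    by rewrite opprD addrA addrAC.
Qed.

(* The same for [a(x, rev rw)^*], when the right factor starts at [v]. *)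
Fixpoint ssplit (v : V) (rw : seq 'I_t) : seq (k * seq 'I_t * seq 'I_t) :=
  if rw is i :: rw' then
    [seq (z.1.1, z.1.2, i :: z.2) | z <- ssplit v rw'] ++
    [seq (qm q ((spath v z.2).1 0 i) * z.1.1, i :: z.1.2, z.2) | z <- ssplit v rw']
  else [:: (1, [::], [::])].

Lemma perm_ssplit v rw z : z \in ssplit v rw -> perm_eq (z.1.2 ++ z.2) rw.
Proof.
elim: rw z => [|i rw IH] z /=; first by rewrite inE => /eqP ->.
rewrite mem_cat => /orP[] /mapP[z' /IH z'_rw ->] /=; last by rewrite perm_cons.
by rewrite -[i :: z'.2]cat1s perm_catCA perm_cons.
Qed.

Definition sterm (x u : V) (z : k * seq 'I_t * seq 'I_t) : k * P * P :=
  (z.1.1, spath u z.1.2, spath (x - u) z.2).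

Definition scoprod (x : V) (rw : seq 'I_t) : tens k n t :=
  flatten [seq map (sterm x u) (ssplit (x - u) rw) | u : V <- allv n t].

Lemma DeltaP_spath x rw : perm_eq (DeltaP C q (spath x rw)) (scoprod x rw).
Proof.
elim: rw => [|i rw IH]; first by rewrite /DeltaP /= DeltaE_map /scoprod /= flatten_map1.
set y := (spath x rw).1.
have -> : DeltaP C q (spath x (i :: rw)) =
          tmul C (DeltaA C q (y, i, true)) (DeltaP C q (spath x rw)).
  have := psrc_spath C x (i :: rw); have := psrc_spath C x rw.
  by rewrite /y /=; case: (spath x rw) => v s /= e1 e2; apply: DeltaP_cons; rewrite e1 e2.
have tgt_split u z : z \in ssplit (x - u) rw -> y - (spath u z.1.2).1 = (spath (x - u) z.2).1.
  move=> /perm_ssplit split_rw.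
  rewrite /y !spath_tgt -(perm_big _ split_rw) big_cat.
  by move: (\sum_(l <- _) _) (\sum_(l <- _) _) => a b; apply/rowP => m; rewrite !mxE; ring.
apply: perm_trans (perm_tmulr C _ IH) _.
rewrite DeltaA_star tmul_catl /scoprod /=.
under [X in perm_eq _ (flatten X)]eq_map => u do rewrite map_cat -!map_comp.
apply: perm_trans _ (perm_flatten_map_cat _ _ _).
apply: perm_cat; apply: (perm_tmul_matched_flatten (g := fun z => z.1.2.1)).
- by move=> z2 u ne; rewrite /tmul_term /pmul /= (negbTE ne).
- move=> u z z_split; rewrite /tmul_term /pmul /psrc /= eqxx tgt_split // eqxx /= mul1r.
  by rewrite /sterm -surjective_pairing.
- by move=> z2 u ne; rewrite /tmul_term /pmul /= (negbTE ne).
- move=> u z z_split; rewrite /tmul_term /pmul /psrc /= eqxx tgt_split // eqxx /=.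
  by rewrite /sterm -surjective_pairing.
Qed.

End CoproductOfPaths.

Section SerreElements.
Variables (k : fieldType) (n t : nat) (C : 'M[int]_t) (q : k).
Local Notation V := (vtx n t).
Local Notation P := (Defs.path n t).

Definition serre_word (K : nat) (i j : 'I_t) (s : nat) := nseq (K - s) i ++ j :: nseq s i.
Definition serre_coef (K s : nat) : k := (-1) ^+ s * qbinom q K s.

Definition serre_comb (K : nat) (i j : 'I_t) (F : seq 'I_t -> k) : k :=
  \sum_(s <- iota 0 K.+1) serre_coef K s * F (serre_word K i j s).

Lemma omega_apath (x : V) i j (K := kappa C i j) :
  omega C q x i j = [seq (serre_coef K s, apath C x (serre_word K i j s)) | s <- iota 0 K.+1].
Proof.
rewrite /omega -[RHS]flatten_map1; congr flatten; apply: eq_map => s.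
by rewrite aw_apath /= mulr1.
Qed.

Lemma omegas_spath (x : V) i j (K := kappa C i j) :
  omegas C q x i j =
    [seq (serre_coef K s, spath C x (rev (serre_word K i j s))) | s <- iota 0 K.+1].
Proof.
rewrite /omegas -[RHS]flatten_map1; congr flatten; apply: eq_map => s.
by rewrite aws_spath /= mulr1.
Qed.

Lemma tcoef_Delta (e : elt k n t) P1 P2 :
  tcoef (Delta C q e) P1 P2 = \sum_(z <- e) z.1 * tcoef (DeltaP C q z.2) P1 P2.
Proof. by rewrite /Delta tcoef_flatten big_map; under eq_bigr do rewrite tcoef_tscale. Qed.

Lemma tcoef_Delta_omega (x : V) i j P1 P2 (K := kappa C i j) :
  tcoef (Delta C q (omega C q x i j)) P1 P2 =
  \sum_(u <- allv n t) serre_comb K i j (fun w =>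
     \sum_(z <- asplit C q u w) z.1.1 * tdelta (apath C u z.1.2) (apath C (x - u) z.2) P1 P2).
Proof.
rewrite /serre_comb tcoef_Delta omega_apath big_map exchange_big /=; apply: eq_bigr => s _.
rewrite (tcoef_perm _ _ (DeltaP_apath _ _ _ _)) tcoef_flatten big_map big_distrr.
by apply: eq_bigr => u _; rewrite tcoefE big_map.
Qed.

Lemma tcoef_Delta_omegas (x : V) i j P1 P2 (K := kappa C i j) :
  tcoef (Delta C q (omegas C q x i j)) P1 P2 =
  \sum_(u <- allv n t) serre_comb K i j (fun w =>
     \sum_(z <- ssplit C q (x - u) (rev w))
       z.1.1 * tdelta (spath C u z.1.2) (spath C (x - u) z.2) P1 P2).
Proof.
rewrite /serre_comb tcoef_Delta omegas_spath big_map exchange_big /=; apply: eq_bigr => s _.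
rewrite (tcoef_perm _ _ (DeltaP_spath _ _ _ _)) tcoef_flatten big_map big_distrr.
by apply: eq_bigr => u _; rewrite tcoefE big_map.
Qed.

Lemma tcoef_skew_primitive_omega (x : V) i j P1 P2 (K := kappa C i j) :
  tcoef (flatten [seq tscale (q ^+ (K * val (u 0 i) + val (u 0 j)))
                      (etens (ebasis k u) (omega C q (x - u) i j)) | u : V <- allv n t] ++
       flatten [seq etens (omega C q u i j) (ebasis k (x - u)) | u : V <- allv n t]) P1 P2 =
  \sum_(u <- allv n t)
    (q ^+ (K * val (u 0 i) + val (u 0 j)) *
       serre_comb K i j (fun w => tdelta (u, [::]) (apath C (x - u) w) P1 P2) +
     serre_comb K i j (fun w => tdelta (apath C u w) (x - u, [::]) P1 P2)).
Proof.
rewrite /serre_comb tcoef_cat !tcoef_flatten !big_map -big_split; apply: eq_bigr => u _ /=.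
by rewrite tcoef_tscale tcoef_etens1l tcoef_etens1r !omega_apath !big_map.
Qed.

Lemma tcoef_skew_primitive_omegas (x : V) i j P1 P2 (K := kappa C i j) :
  tcoef (flatten [seq etens (ebasis k u) (omegas C q (x - u) i j) | u : V <- allv n t] ++
       flatten [seq tscale (q ^- (K * val ((x - u) 0 i) + val ((x - u) 0 j)))
                      (etens (omegas C q u i j) (ebasis k (x - u))) | u : V <- allv n t]) P1 P2 =
  \sum_(u <- allv n t)
    (serre_comb K i j (fun w => tdelta (u, [::]) (spath C (x - u) (rev w)) P1 P2) +
     q ^- (K * val ((x - u) 0 i) + val ((x - u) 0 j)) *
       serre_comb K i j (fun w => tdelta (spath C u (rev w)) (x - u, [::]) P1 P2)).
Proof.
rewrite /serre_comb tcoef_cat !tcoef_flatten !big_map -big_split; apply: eq_bigr => u _ /=.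
by rewrite tcoef_tscale tcoef_etens1l tcoef_etens1r !omegas_spath !big_map.
Qed.

End SerreElements.

Section RootOfUnityPowers.
Variables (k : fieldType) (n : nat) (q : k).
Hypotheses (q_prim : n.-primitive_root q) (n_gt1 : (1 < n)%N).

Lemma primitive_root_neq0 : q != 0.
Proof. by rewrite (prim_root_eq0 q_prim) -lt0n ltnW. Qed.

Lemma primitive_root_expr_neq1 m : (0 < m < n)%N -> q ^+ m != 1.
Proof. by case/andP=> m_gt0 m_lt_n; rewrite -(prim_order_dvd q_prim) gtnNdvd. Qed.

Lemma qpD (a b : 'Z_n) : qp q (a + b) = qp q a * qp q b.
Proof.
rewrite /qp -exprD /=; move: (val a + val b)%N => m.
by rewrite Zp_cast // (prim_expr_mod q_prim).
Qed.

Lemma qp_neq0 (a : 'Z_n) : qp q a != 0.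
Proof. by rewrite expf_neq0 // primitive_root_neq0. Qed.

Lemma qpN (a : 'Z_n) : qp q (- a) = (qp q a)^-1.
Proof.
by apply: (mulIf (qp_neq0 a)); rewrite -qpD addNr mulVf ?qp_neq0.
Qed.

Lemma qpB (a b : 'Z_n) : qp q (a - b) = qp q a / qp q b.
Proof. by rewrite qpD qpN. Qed.

Lemma qp_intr (m : int) : qp q (m%:~R : 'Z_n) = q ^ m.
Proof.
have qp_nat (l : nat) : qp q (l%:R : 'Z_n) = q ^+ l.
  by rewrite /qp /= val_Zp_nat // (prim_expr_mod q_prim).
by case: m => l; rewrite ?NegzE ?mulrNz -pmulrn ?qpN qp_nat.
Qed.

End RootOfUnityPowers.

Section SmallQBinomials.
Variables (k : fieldType) (q : k).
Hypotheses (q_neq0 : q != 0) (q2_neq1 : q ^+ 2 != 1).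

Lemma qsub_neq0 : q - q^-1 != 0.
Proof.
apply: contra q2_neq1; rewrite subr_eq0 => /eqP q_inv.
by rewrite expr2 {1}q_inv mulVf.
Qed.

Lemma qint1 : qint q 1 = 1.
Proof. by rewrite /qint expr1 divff // qsub_neq0. Qed.

Lemma qint2 : qint q 2 = q + q^-1.
Proof. by rewrite /qint; field; rewrite q_neq0 subr_eq0 -expr2. Qed.

Lemma qfact0 : qfact q 0 = 1.
Proof. by rewrite /qfact big_geq. Qed.

Lemma qfact1 : qfact q 1 = 1.
Proof. by rewrite /qfact big_nat1 qint1. Qed.

Lemma qfact2 : qfact q 2 = q + q^-1.
Proof. by rewrite /qfact big_nat_recr //= big_nat1 qint1 qint2 mul1r. Qed.

Lemma qbinom1 s : (s <= 1)%N -> qbinom q 1 s = 1.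
Proof. by case: s => [|[]] // _; rewrite /qbinom /= qfact0 qfact1 mulr1 invr1 mulr1. Qed.

Hypothesis q4_neq1 : q ^+ 4 != 1.

Lemma qadd_neq0 : q + q^-1 != 0.
Proof.
apply: contra q4_neq1; rewrite addr_eq0 => /eqP q_inv.
have qq : q * q = -1 by rewrite {1}q_inv mulNr mulVf.
by rewrite (exprM q 2 2) -[q ^+ 2]/(q * q) qq sqrrN expr1n.
Qed.

Lemma qbinom2 s : (s <= 2)%N -> qbinom q 2 s = if s == 1%N then q + q^-1 else 1.
Proof.
case: s => [|[|[]]] // _; rewrite /qbinom qfact2 ?qfact0 ?qfact1 /=.
- by rewrite mul1r divff // qadd_neq0.
- by rewrite mul1r invr1 mulr1.
- by rewrite mulr1 divff // qadd_neq0.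
Qed.

End SmallQBinomials.

(* Keeps q-powers and paths as atoms for [field] when the splittings of the
   Serre words are expanded by simplification. *)
Arguments qp : simpl never.
Arguments qm : simpl never.
Arguments apath : simpl never.
Arguments spath : simpl never.
Arguments tdelta : simpl never.

Section SerreCoproduct.
Variables (k : fieldType) (n t : nat) (C : 'M[int]_t) (q : k).
Hypotheses (q_prim : n.-primitive_root q) (n_gt1 : (1 < n)%N).
Hypotheses (q2_neq1 : q ^+ 2 != 1) (q4_neq1 : q ^+ 4 != 1).
Variables (i j : 'I_t).
Hypotheses (Cii : C i i = 2) (Cji : C j i = C i j).
Local Notation V := (vtx n t).

Let q_neq0 := primitive_root_neq0 q_prim n_gt1.

Lemma qp_sub_col (u : V) l m : qp q ((u - colv n C l) 0 m) = qp q (u 0 m) / q ^ C m l.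
Proof. by rewrite !mxE qpB // qp_intr. Qed.

Lemma apath_nil (u : V) : apath C u [::] = (u, [::]). Proof. by []. Qed.

Lemma serre_comb_asplit (u v : V) P1 P2 (K := kappa C i j) :
  C i j = 0 \/ C i j = -1 ->
  serre_comb q K i j (fun w =>
    \sum_(z <- asplit C q u w) z.1.1 * tdelta (apath C u z.1.2) (apath C v z.2) P1 P2) =
  q ^+ (K * val (u 0 i) + val (u 0 j)) *
    serre_comb q K i j (fun w => tdelta (u, [::]) (apath C v w) P1 P2) +
  serre_comb q K i j (fun w => tdelta (apath C u w) (v, [::]) P1 P2).
Proof.
rewrite /serre_comb /K exprD mulnC exprM.
rewrite -[q ^+ val (u 0 i)]/(qp q (u 0 i)) -[q ^+ val (u 0 j)]/(qp q (u 0 j)).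
case=> Cij; [have -> : kappa C i j = 1%N | have -> : kappa C i j = 2%N]; rewrite /kappa ?Cij //;
  rewrite [iota _ _]/= !(@big_cons _ _ _ nat) !(@big_nil _ _ _ nat) /= !big_cons !big_nil;
  rewrite !apath_nil !qp_sub_col ?Cji ?Cij ?Cii /serre_coef ?qbinom1 ?qbinom2 //=;
  rewrite ?expr0z -?exprnP ?exprN1; by field; rewrite ?q_neq0 oner_eq0.
Qed.

Lemma qmE (a : 'Z_n) : qm q a = (qp q a)^-1. Proof. by []. Qed.

Lemma spath_nil (u : V) : spath C u [::] = (u, [::]). Proof. by []. Qed.

Lemma serre_comb_ssplit (u v : V) P1 P2 (K := kappa C i j) :
  C i j = 0 \/ C i j = -1 ->
  serre_comb q K i j (fun w =>
    \sum_(z <- ssplit C q v (rev w)) z.1.1 * tdelta (spath C u z.1.2) (spath C v z.2) P1 P2) =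
  serre_comb q K i j (fun w => tdelta (u, [::]) (spath C v (rev w)) P1 P2) +
  q ^- (K * val (v 0 i) + val (v 0 j)) *
    serre_comb q K i j (fun w => tdelta (spath C u (rev w)) (v, [::]) P1 P2).
Proof.
rewrite /serre_comb /K exprD mulnC exprM.
rewrite -[q ^+ val (v 0 i)]/(qp q (v 0 i)) -[q ^+ val (v 0 j)]/(qp q (v 0 j)).
case=> Cij; [have -> : kappa C i j = 1%N | have -> : kappa C i j = 2%N]; rewrite /kappa ?Cij //;
  rewrite /rev [iota _ _]/= !(@big_cons _ _ _ nat) !(@big_nil _ _ _ nat) /= !big_cons !big_nil /=;
  rewrite !spath_nil !qmE !qp_sub_col ?Cji ?Cij ?Cii /serre_coef ?qbinom1 ?qbinom2 //=;
  rewrite ?expr0z -?exprnP ?exprN1; by field; rewrite ?q_neq0 ?qp_neq0 ?oner_eq0.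
Qed.

End SerreCoproduct.

Theorem mainTheorem4 (k : fieldType) (n : nat) (q : k) (t : nat) (C : 'M[int]_t) :
  (5 <= n)%N -> n.-primitive_root q -> simply_laced_cartan C ->
  forall (x : 'rV['Z_n]_t) (i j : 'I_t), i != j ->
    teqPi C q
      (Delta C q (omega C q x i j))
      (flatten [seq tscale (q ^+ (kappa C i j * val (u 0 i) + val (u 0 j)))
                      (etens (ebasis k u) (omega C q (x - u) i j)) | u : 'rV['Z_n]_t <- allv n t] ++
       flatten [seq etens (omega C q u i j) (ebasis k (x - u)) | u : 'rV['Z_n]_t <- allv n t])
    /\
    teqPi C q
      (Delta C q (omegas C q x i j))
      (flatten [seq etens (ebasis k u) (omegas C q (x - u) i j) | u : 'rV['Z_n]_t <- allv n t] ++
       flatten [seq tscale (q ^- (kappa C i j * val ((x - u) 0 i) + val ((x - u) 0 j)))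
                      (etens (omegas C q u i j) (ebasis k (x - u))) | u : 'rV['Z_n]_t <- allv n t]).
Proof.
move=> n_gt4 q_prim [Cdiag Coff Csym _] x i j i_neq_j.
have n_gt1 : (1 < n)%N := leq_trans (isT : 2 <= 5)%N n_gt4.
have q_neq1 m : (0 < m < 5)%N -> q ^+ m != 1.
  case/andP=> m_gt0 m_lt5; apply: (primitive_root_expr_neq1 q_prim).
  by rewrite m_gt0 (leq_trans m_lt5 n_gt4).
have [q2_neq1 q4_neq1] := (q_neq1 2%N isT, q_neq1 4%N isT).
have Cij := Coff i j i_neq_j.
split; apply: teqPi_tcoef => P1 P2.
- rewrite tcoef_Delta_omega tcoef_skew_primitive_omega; apply: eq_bigr => u _.
  exact: (serre_comb_asplit q_prim n_gt1 q2_neq1 q4_neq1 (Cdiag i) (Csym j i)).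
- rewrite tcoef_Delta_omegas tcoef_skew_primitive_omegas; apply: eq_bigr => u _.
  exact: (serre_comb_ssplit q_prim n_gt1 q2_neq1 q4_neq1 (Cdiag i) (Csym j i)).
Qed.
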